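(* Let $I\subseteq\mathbb{R}$ be an interval, let $f:I\to\mathbb{R}$ be differentiable on the interior $I^\circ$ of $I$, and let $a,b\in I$ with $a<b$ and $f'\in L^1[a,b]$. Let $s\in(0,1]$, $\alpha\in[0,1]$, $m\in(0,1]$, assume $b/m\in I^\circ$, and let $p>1$ and $q=\frac{p}{p-1}$. If $|f'|^q$ is $s$-$(\alpha,m)$-convex (in the first sense) on $[a,b]$, then $$\left|\frac{f(a)+f(b)}{2}-\frac{1}{b-a}\int_a^b f(x)\,dx\right|\le (b-a)\left[\frac{2}{(p+1)(p+2)}\right]^{1/p}\left(\frac{|f'(a)|^q+m\alpha s\left|f'\!\left(\frac{b}{m}\right)\right|^q}{\alpha s+1}\right)^{1/q}.$$
   Context: Let $s\in(0,1]$, $\alpha\in[0,1]$, $m\in(0,1]$. A nonnegative function $g$ is called $s$-$(\alpha,m)$-convex (in the first sense) on $[a,b]$ if for all $x,y\in[a,b]$ (with $y/m$ in the domain of $g$) and all $t\in[0,1]$, $$g(tx+(1-t)y)\le t^{\alpha s}g(x)+m\,(1-t^{\alpha s})\,g\!\left(\frac{y}{m}\right).$$ *)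

From HB Require Import structures.
From mathcomp Require Import all_boot all_order all_algebra.
From mathcomp Require Import all_classical all_reals all_analysis.
Set Implicit Arguments. Unset Strict Implicit. Unset Printing Implicit Defensive.
Import Order.TTheory GRing.Theory Num.Theory.
Import numFieldNormedType.Exports.
Local Open Scope classical_set_scope.
Local Open Scope ring_scope.

(* g is s-(alpha,m)-convex (first sense) on [a,b]; D is the domain of g
   (used for the side condition "y/m in the domain of g"). g is nonnegative. *)
Definition s_alpha_m_convex (R : realType) (s alpha m : R) (D : set R)
  (g : R -> R) (a b : R) : Prop :=
  (forall x, D x -> 0 <= g x) /\
  (forall x y t : R, a <= x <= b -> a <= y <= b -> D (y / m) -> 0 <= t <= 1 ->
     g (t * x + (1 - t) * y)
       <= t `^ (alpha * s) * g x + m * (1 - t `^ (alpha * s)) * g (y / m)).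

(* Let mid = (a + b) / 2 and P x = (x - mid) f x - \int_a^x f, so that P b - P a is
   (b - a) times the trapezoid error and P' = (x - mid) f'.  Instead of integrating f'
   and applying Hoelder's inequality, bound |P'| pointwise by Young's inequality with a
   weight c > 0, c^p |x - mid|^p / p + c^-q |f'|^q / q, and |f'|^q by the convexity
   bound along [a, b].  Both terms have explicit primitives, so a mean-value comparison
   bounds |P b - P a| by their increments; minimising over c yields
   |error| <= ((b - a)/2) (p + 1)^(-1/p) M^(1/q), with M the mean of the convexity
   bound, and this is below the stated constant because p + 2 <= 2^(p + 1). *)

From HB Require Import structures.
From mathcomp Require Import all_boot all_order all_algebra.
From mathcomp Require Import all_classical all_reals all_analysis.
From mathcomp Require Import ring lra.
Import Order.TTheory GRing.Theory Num.Theory.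
Import numFieldNormedType.Exports.
Local Open Scope classical_set_scope.
Local Open Scope ring_scope.

Section positive_part_power.
Context {R : realType}.
Implicit Types y e : R.

(* powR is 1 on negative arguments, hence the truncation. *)
Definition pospow y e : R := Num.max y 0 `^ e.

Lemma pospow_gt0E y e : 0 < y -> pospow y e = y `^ e.
Proof. by move=> y0; rewrite /pospow max_l ?(ltW y0). Qed.

Lemma pospow_le0E y e : y <= 0 -> e != 0 -> pospow y e = 0.
Proof. by move=> y0 e0; rewrite /pospow max_r// powR0. Qed.

Lemma is_derive_pospow_gt0 y e : 0 < y ->
  is_derive y 1 (pospow ^~ e) (e * y `^ (e - 1)).
Proof.
move=> y0; apply: near_eq_is_derive (is_derive1_powR e y0).
by near=> z; rewrite pospow_gt0E//; near: z; exact: lt_nbhsr.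
Unshelve. all: by end_near. Qed.

Lemma is_derive_pospow_lt0 y e : y < 0 -> e != 0 -> is_derive y 1 (pospow ^~ e) 0.
Proof.
move=> y0 e0; apply: near_eq_is_derive (is_derive_cst 0 y 1).
by near=> z; rewrite pospow_le0E// ltW//; near: z; exact: lt_nbhsl.
Unshelve. all: by end_near. Qed.

Lemma continuous_pospow e : 0 < e -> continuous (pospow ^~ e).
Proof.
move=> e0 y; have [y0|y0|->] := ltgtP y 0.
- by have [+ _] := is_derive_pospow_lt0 _ _ y0 (lt0r_neq0 e0);
    move=> /derivable1_diffP/differentiable_continuous.
- by have [+ _] := is_derive_pospow_gt0 _ e y0;
    move=> /derivable1_diffP/differentiable_continuous.
apply/left_right_continuousP; rewrite /= pospow_le0E ?gt_eqF//; split.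
- apply: cvg_near_cst; near=> z.
  by rewrite pospow_le0E ?gt_eqF// ltW//; near: z; exact: nbhs_left_lt.
- apply: cvg_trans (powR_cvg0 e0); apply: near_eq_cvg; near=> z.
  by rewrite /= pospow_gt0E//; near: z; exact: nbhs_right_gt.
Unshelve. all: by end_near. Qed.

Definition spow y e : R := pospow y e - pospow (- y) e.

Lemma continuous_spow e : 0 < e -> continuous (spow ^~ e).
Proof.
move=> e0 y.
exact: continuousB (continuous_pospow _ e0 y)
  (continuous_comp (opp_continuous _) (continuous_pospow _ e0 _)).
Qed.

Lemma is_derive_spow y e : y != 0 -> e != 0 ->
  is_derive y 1 (spow ^~ e) (e * `|y| `^ (e - 1)).
Proof.
rewrite neq_lt => /orP[yn|yp] e0.
- have hr : is_derive y 1 (pospow ^~ e \o -%R) (e * (- y) `^ (e - 1) * -1).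
    by apply: is_derive1_comp; apply: is_derive_pospow_gt0; rewrite oppr_gt0.
  apply: is_derive_eq (is_deriveB (is_derive_pospow_lt0 _ _ yn e0) hr) _.
  by rewrite ltr0_norm//; ring.
- have hr : is_derive y 1 (pospow ^~ e \o -%R) (0 * -1).
    by apply: is_derive1_comp; apply: is_derive_pospow_lt0; rewrite ?oppr_lt0.
  apply: is_derive_eq (is_deriveB (is_derive_pospow_gt0 _ e yp) hr) _.
  by rewrite gtr0_norm//; ring.
Qed.

End positive_part_power.

Section comparison.
Context {R : realType}.
Implicit Types (P Q dP dQ : R -> R) (u v w : R).

Lemma norm_increment_le P Q dP dQ u v : u <= v ->
  (forall x, x \in `]u, v[ -> is_derive x 1 P (dP x)) ->
  (forall x, x \in `]u, v[ -> is_derive x 1 Q (dQ x)) ->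
  {within `[u, v], continuous P} -> {within `[u, v], continuous Q} ->
  (forall x, x \in `]u, v[ -> `|dP x| <= dQ x) ->
  `|P v - P u| <= Q v - Q u.
Proof.
rewrite le_eqVlt => /predU1P[->|uv] dP_P dQ_Q cP cQ dPQ.
  by rewrite !subrr normr0.
have uv0 : 0 <= v - u by rewrite subr_ge0 ltW.
have [c1 c1uv] := MVT uv (fun x hx => is_deriveB (dQ_Q x hx) (dP_P x hx))
  (fun x => continuousB (cQ x) (cP x)).
have [c2 c2uv] := MVT uv (fun x hx => is_deriveD (dQ_Q x hx) (dP_P x hx))
  (fun x => continuousD (cQ x) (cP x)).
rewrite !fctE => QPc2 QPc1.
have /ler_normlP[_ dPc1] := dPQ _ c1uv.
have /ler_normlP[dPc2 _] := dPQ _ c2uv.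
rewrite ler_norml; apply/andP; split.
- have : 0 <= (dQ c2 + dP c2) * (v - u) by apply: mulr_ge0 => //; lra.
  by rewrite -QPc2; lra.
- have : 0 <= (dQ c1 - dP c1) * (v - u) by apply: mulr_ge0 => //; lra.
  by rewrite -QPc1; lra.
Qed.

Lemma norm_increment_le_split P Q dP dQ u w v : u <= w <= v ->
  (forall x, x \in `]u, v[ -> x != w -> is_derive x 1 P (dP x)) ->
  (forall x, x \in `]u, v[ -> x != w -> is_derive x 1 Q (dQ x)) ->
  {within `[u, v], continuous P} -> {within `[u, v], continuous Q} ->
  (forall x, x \in `]u, v[ -> x != w -> `|dP x| <= dQ x) ->
  `|P v - P u| <= Q v - Q u.
Proof.
move=> /andP[uw wv] dP_P dQ_Q cP cQ dPQ.
have lo x : x \in `]u, w[ -> (x \in `]u, v[) /\ x != w.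
  by rewrite !in_itv/= => /andP[ux xw]; rewrite ux lt_eqF// (lt_le_trans xw).
have hi x : x \in `]w, v[ -> (x \in `]u, v[) /\ x != w.
  by rewrite !in_itv/= => /andP[wx xv]; rewrite xv gt_eqF// (le_lt_trans uw).
have sub_lo : `[u, w] `<=` `[u, v] by apply: subset_itvl; rewrite bnd_simp.
have sub_hi : `[w, v] `<=` `[u, v] by apply: subset_itvr; rewrite bnd_simp.
have Ilo : `|P w - P u| <= Q w - Q u.
  apply: norm_increment_le uw _ _ (continuous_subspaceW sub_lo cP)
    (continuous_subspaceW sub_lo cQ) _.
  - by move=> x /lo[]; exact: dP_P.
  - by move=> x /lo[]; exact: dQ_Q.
  - by move=> x /lo[]; exact: dPQ.
have Ihi : `|P v - P w| <= Q v - Q w.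
  apply: norm_increment_le wv _ _ (continuous_subspaceW sub_hi cP)
    (continuous_subspaceW sub_hi cQ) _.
  - by move=> x /hi[]; exact: dP_P.
  - by move=> x /hi[]; exact: dQ_Q.
  - by move=> x /hi[]; exact: dPQ.
have -> : P v - P u = (P v - P w) + (P w - P u) by ring.
by apply: le_trans (ler_normD _ _) _; lra.
Qed.

End comparison.

Section young.
Context {R : realType} {p q : R}.
Hypotheses (p0 : 0 < p) (q0 : 0 < q) (pq : p^-1 + q^-1 = 1).

Lemma young_scaled (c u v : R) : 0 < c -> 0 <= u -> 0 <= v ->
  u * v <= c `^ p * u `^ p / p + c `^ (- q) * v `^ q / q.
Proof.
move=> c0 u0 v0; have ci0 : 0 <= c^-1 by rewrite invr_ge0 ltW.
have -> : u * v = (c * u) * (c^-1 * v) by rewrite mulrACA divff ?gt_eqF// mul1r.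
apply: le_trans (conjugate_powR (mulr_ge0 (ltW c0) u0) (mulr_ge0 ci0 v0) p0 q0 pq) _.
by rewrite (powRM _ (ltW c0) u0) (powRM _ ci0 v0) -powR_inv1 ?(ltW c0)// -powRrM mulN1r.
Qed.

Lemma young_scaled_inf (U V X : R) : 0 < U -> 0 <= V ->
  (forall c, 0 < c -> X <= c `^ p * U / p + c `^ (- q) * V / q) ->
  X <= U `^ p^-1 * V `^ q^-1.
Proof.
move=> U0; rewrite le_eqVlt => /predU1P[<- hX|V0 hX].
  rewrite powR0 ?invr_eq0 ?gt_eqF// mulr0.
  apply/ler_addgt0Pr => e e0; rewrite add0r.
  pose c := (e * p / U) `^ p^-1.
  have cp : c `^ p = e * p / U.
    by rewrite -powRrM mulVf ?gt_eqF// powRr1// divr_ge0 ?mulr_ge0 ?(ltW e0) ?(ltW p0) ?(ltW U0).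
  have c0 : 0 < c by rewrite powR_gt0// divr_gt0// mulr_gt0.
  have := hX c c0; rewrite mulr0 mul0r addr0 cp.
  by rewrite divfK ?gt_eqF// mulfK ?gt_eqF.
(* the minimiser of the right-hand side, c ^ (p * q) = V / U *)
pose c := expR ((ln V - ln U) / (p * q)).
pose E := expR (p^-1 * ln U + q^-1 * ln V).
have qinv : q^-1 = 1 - p^-1 by rewrite -pq addrAC subrr add0r.
have cpU : c `^ p * U = E.
  rewrite /powR gt_eqF ?expR_gt0// expRK -[U in _ * U](lnK U0) -expRD /E.
  congr expR; rewrite (_ : p * _ = (ln V - ln U) * q^-1); last by field; rewrite !gt_eqF.
  by rewrite qinv; ring.
have cqV : c `^ (- q) * V = E.
  rewrite /powR gt_eqF ?expR_gt0// expRK -[V in _ * V](lnK V0) -expRD /E.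
  congr expR; rewrite (_ : - q * _ = - (ln V - ln U) * p^-1); last by field; rewrite !gt_eqF.
  by rewrite qinv; ring.
have -> : U `^ p^-1 * V `^ q^-1 = E.
  by rewrite /powR !gt_eqF// -expRD.
have := hX c (expR_gt0 _); rewrite cpU cqV.
by rewrite -!mulrDr pq mulr1.
Qed.

End young.

Section trapezoid.
Context {R : realType} {f Phi phi : R -> R} {a b p q : R}.
Hypotheses (ab : a < b) (p0 : 0 < p) (q0 : 0 < q) (pq : p^-1 + q^-1 = 1).
Hypothesis fd : forall x, a <= x <= b -> derivable f x 1.
Hypothesis Phic : {within `[a, b], continuous Phi}.
Hypothesis Phid : forall x, a < x < b -> is_derive x 1 Phi (phi x).
Hypothesis f'_le_phi : forall x, a < x < b -> `|derive1 f x| `^ q <= phi x.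
Notation mu := (@lebesgue_measure R).

Let mid := (a + b) / 2.
Let F x := Rintegral mu `[a, x] f.

Let P x := (x - mid) * f x - F x.

Let continuous_center : continuous (shift (- mid)).
Proof.
by move=> y; have [/derivable1_diffP/differentiable_continuous] := is_derive_shift y 1 (- mid).
Qed.

Let fc x : a <= x <= b -> {for x, continuous f}.
Proof. by move=> /fd/derivable1_diffP/differentiable_continuous. Qed.

Let f_integrable : mu.-integrable `[a, b] (EFin \o f).
Proof.
apply: continuous_compact_integrable; first exact: segment_compact.
by apply: continuous_in_subspaceT => x; rewrite inE/= in_itv/=; exact: fc.
Qed.

Let is_derive_P x : a < x < b -> is_derive x 1 P ((x - mid) * derive1 f x).
Proof.
move=> /andP[ax xb]; have axb : a <= x <= b by rewrite !ltW.
have [dF F'] := continuous_FTC1_closed xb f_integrable ax (fc _ axb).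
have hF : is_derive x 1 F (f x) by apply: DeriveDef; rewrite // -derive1E.
have hf : is_derive x 1 f (derive1 f x) by rewrite derive1E; exact/derivableP/fd.
apply: is_derive_eq (is_deriveB (is_deriveM (is_derive_shift x 1 (- mid)) hf) hF) _.
by rewrite [_%:A]mulr1 addrK.
Qed.

Let continuous_P : {within `[a, b], continuous P}.
Proof.
have Fc := parameterized_integral_continuous (ltW ab) f_integrable.
have fcw : {within `[a, b], continuous f}.
  by apply: continuous_in_subspaceT => x; rewrite inE/= in_itv/=; exact: fc.
have sc : {within `[a, b], continuous (shift (- mid))}.
  exact: continuous_subspaceT.
move=> x; exact: continuousB (continuousM (sc x) (fcw x)) (Fc x).
Qed.

Let P_increment :
  P b - P a = (b - a) * ((f a + f b) / 2 - (b - a)^-1 * Rintegral mu `[a, b] f).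
Proof.
rewrite /P (_ : F a = 0); last by rewrite /F set_itv1 Rintegral_set1.
by rewrite /F /mid; field; rewrite subr_eq0 gt_eqF.
Qed.

Let Psi c := c `^ p / (p * (p + 1)) \*: (fun x => spow (x - mid) (p + 1))
  + c `^ (- q) / q \*: Phi.

Let is_derive_Psi c x : a < x < b -> x != mid ->
  is_derive x 1 (Psi c) (c `^ p * `|x - mid| `^ p / p + c `^ (- q) * phi x / q).
Proof.
move=> axb xmid; have p10 : p + 1 != 0 by rewrite gt_eqF// addr_gt0.
have xm0 : x - mid != 0 by rewrite subr_eq0.
have hs : is_derive x 1 (fun y => spow (y - mid) (p + 1)) ((p + 1) * `|x - mid| `^ p).
  apply: is_derive_eq (is_derive1_comp (f := spow ^~ (p + 1)) (g := shift (- mid))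
    (is_derive_spow _ _ xm0 p10) (is_derive_shift x 1 (- mid))) _.
  by rewrite addrK mulr1.
apply: is_derive_eq (is_deriveD (is_deriveZ (c `^ p / (p * (p + 1))) hs)
  (is_deriveZ (c `^ (- q) / q) (Phid _ axb))) _.
by rewrite /GRing.scale/=; field; rewrite p10 !gt_eqF.
Qed.

Let continuous_Psi c : {within `[a, b], continuous (Psi c)}.
Proof.
have sc : {within `[a, b], continuous (fun x => spow (x - mid) (p + 1))}.
  apply: continuous_subspaceT => y.
  exact: continuous_comp (continuous_center y) (continuous_spow _ (addr_gt0 p0 ltr01) _).
by move=> x; apply: continuousD; apply: continuousZl_tmp; [exact: sc | exact: Phic].
Qed.

Let Psi_increment c : Psi c b - Psi c a = (b - a) *
  (c `^ p * (((b - a) / 2) `^ p / (p + 1)) / p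
   + c `^ (- q) * ((Phi b - Phi a) / (b - a)) / q).
Proof.
set h := (b - a) / 2; have h0 : 0 < h by rewrite divr_gt0// subr_gt0.
have p10 : p + 1 != 0 by rewrite gt_eqF// addr_gt0.
have bmid : b - mid = h by rewrite /mid /h; field.
have amid : a - mid = - h by rewrite /mid /h; field.
have hp1 : h `^ (p + 1) = h `^ p * h.
  by rewrite powRD ?powRr1 ?(ltW h0) ?(negbTE p10).
rewrite /Psi !fctE /spow /= bmid amid opprK /GRing.scale/=.
rewrite pospow_gt0E// pospow_le0E ?oppr_le0 ?(ltW h0)// hp1.
by rewrite /h; field; rewrite p10 !gt_eqF// subr_gt0.
Qed.

Let young_P c x : 0 < c -> a < x < b ->
  `|(x - mid) * derive1 f x| <= c `^ p * `|x - mid| `^ p / p + c `^ (- q) * phi x / q.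
Proof.
move=> c0 axb; rewrite normrM.
apply: le_trans (young_scaled p0 q0 pq _ _ _ c0 (normr_ge0 _) (normr_ge0 _)) _.
rewrite lerD2l ler_pM2r ?invr_gt0//.
by apply: ler_wpM2l; [exact: powR_ge0 | exact: f'_le_phi].
Qed.

Lemma trapezoid_error_le :
  `|(f a + f b) / 2 - (b - a)^-1 * Rintegral mu `[a, b] f|
    <= (((b - a) / 2) `^ p / (p + 1)) `^ p^-1 * ((Phi b - Phi a) / (b - a)) `^ q^-1.
Proof.
have ba0 : 0 < b - a by rewrite subr_gt0.
have amidb : a <= mid <= b by rewrite /mid; apply/andP; split; lra.
have in_ab x : x \in `]a, b[ -> a < x < b by rewrite in_itv.
apply: young_scaled_inf => //.
- by rewrite divr_gt0 ?addr_gt0// powR_gt0// divr_gt0.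
- apply: divr_ge0; last exact: ltW.
  apply: le_trans (normr_ge0 (0 - 0 : R)) _.
  apply: (@norm_increment_le R (fun=> 0) Phi (fun=> 0) phi a b (ltW ab)) => //.
  + by move=> x; exact: cvg_cst.
  + move=> x /in_ab axb; rewrite normr0.
    exact: le_trans (powR_ge0 _ _) (f'_le_phi _ axb).
move=> c c0; rewrite -(ler_pM2l ba0) -[X in X * _]gtr0_norm// -normrM -P_increment.
rewrite -Psi_increment.
apply: norm_increment_le_split amidb _ _ continuous_P (continuous_Psi c) _.
- by move=> x /in_ab axb _; exact: is_derive_P.
- by move=> x /in_ab axb; exact: is_derive_Psi.
- by move=> x /in_ab axb _; exact: young_P.
Qed.

End trapezoid.

Lemma trapezoid_error_le_weighted {R : realType} {f : R -> R} {a b p q r A B : R} :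
  a < b -> 0 < p -> 0 < q -> p^-1 + q^-1 = 1 -> 0 <= r ->
  (forall x, a <= x <= b -> derivable f x 1) ->
  (forall x, a < x < b -> `|derive1 f x| `^ q <=
     ((b - x) / (b - a)) `^ r * A + (1 - ((b - x) / (b - a)) `^ r) * B) ->
  `|(f a + f b) / 2 - (b - a)^-1 * Rintegral (@lebesgue_measure R) `[a, b] f|
    <= (((b - a) / 2) `^ p / (p + 1)) `^ p^-1 * ((A + r * B) / (r + 1)) `^ q^-1.
Proof.
move=> ab p0 q0 pq r0 fd f'_le; have ba0 : b - a != 0 by rewrite subr_eq0 gt_eqF.
have r1 : 0 < r + 1 by rewrite ltr_wpDl.
pose t x := (b - x) / (b - a).
have dt (x : R) : is_derive x 1 t (- (b - a)^-1).
  apply: is_derive_eq (is_deriveM (is_deriveB (is_derive_cst b x 1) (is_derive_id x 1))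
    (is_derive_cst (b - a)^-1 x 1)) _.
  by rewrite /GRing.scale/=; ring.
have tb : t b = 0 by rewrite /t subrr mul0r.
have ta : t a = 1 by rewrite /t divff.
pose K := (b - a) * (A - B) / (r + 1).
pose Phi x := B * x - K * pospow (t x) (r + 1).
have dPhi x : a < x < b -> is_derive x 1 Phi (t x `^ r * A + (1 - t x `^ r) * B).
  move=> /andP[ax xb]; have tx0 : 0 < t x by rewrite divr_gt0 ?subr_gt0.
  have hp := is_derive1_comp (f := pospow ^~ (r + 1)) (g := t)
    (is_derive_pospow_gt0 _ (r + 1) tx0) (dt x).
  apply: is_derive_eq (is_deriveB (is_deriveM (is_derive_cst B x 1) (is_derive_id x 1))
    (is_deriveM (is_derive_cst K x 1) hp)) _.
  by rewrite /GRing.scale/= addrK /K; field; rewrite ba0 gt_eqF.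
have cPhi : {within `[a, b], continuous Phi}.
  apply: continuous_subspaceT => x.
  have tc : {for x, continuous t}.
    by have [/derivable1_diffP/differentiable_continuous] := dt x.
  exact: continuousB (continuousM (cvg_cst _) (@cvg_id _ _))
    (continuousM (cvg_cst _) (continuous_comp tc (continuous_pospow _ r1 _))).
have -> : (A + r * B) / (r + 1) = (Phi b - Phi a) / (b - a).
  rewrite /Phi tb ta pospow_le0E ?gt_eqF// pospow_gt0E// powR1 /K.
  by field; rewrite ba0 gt_eqF.
exact: trapezoid_error_le ab p0 q0 pq fd cPhi dPhi f'_le.
Qed.

Section constants.
Context {R : realType}.

Lemma addr2_le_two_powR (p : R) : 0 <= p -> p + 2 <= 2 * 2 `^ p.
Proof.
move=> p0; have ln2 : 2^-1 <= ln (2 : R).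
  rewrite -ler_expR lnK ?posrE//.
  have := expR_ge1Dx (- 2^-1 : R).
  by rewrite expRN -[(expR _)^-1]div1r ler_pdivlMr ?expR_gt0//; lra.
have := expR_ge1Dx (p * ln 2); rewrite /powR gt_eqF//.
have : p * 2^-1 <= p * ln 2 by exact: ler_wpM2l.
lra.
Qed.

Lemma trapezoid_constant_le (h p : R) : 0 <= h -> 0 < p ->
  ((h / 2) `^ p / (p + 1)) `^ p^-1 <= h * (2 / ((p + 1) * (p + 2))) `^ p^-1.
Proof.
move=> h0 p0; have p1 : 0 < p + 1 by rewrite ltr_wpDl// ltW.
have p2 : 0 < p + 2 by rewrite ltr_wpDl// ltW.
have t0 : 0 < 2 `^ p :> R by rewrite powR_gt0.
have c0 : 0 <= 2 / ((p + 1) * (p + 2)) :> R.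
  exact: divr_ge0 (ler0n _ 2) (mulr_ge0 (ltW p1) (ltW p2)).
have hK : (h `^ p) `^ p^-1 = h by rewrite -powRrM mulfV ?gt_eqF// powRr1.
rewrite -[X in _ <= X * _]hK -powRM ?powR_ge0//.
apply: ge0_ler_powR.
- by rewrite invr_ge0 (ltW p0).
- by rewrite nnegrE divr_ge0 ?powR_ge0 ?(ltW p1).
- by rewrite nnegrE mulr_ge0 ?powR_ge0.
rewrite powRM// -powR_inv1// -powRrM mulN1r powRN.
rewrite -mulrA; apply: ler_wpM2l; first exact: powR_ge0.
rewrite -subr_ge0.
have -> : 2 / ((p + 1) * (p + 2)) - (2 `^ p)^-1 / (p + 1)
    = (2 * 2 `^ p - (p + 2)) / (2 `^ p * (p + 1) * (p + 2)).
  by field; rewrite !gt_eqF.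
apply: divr_ge0; first by rewrite subr_ge0 addr2_le_two_powR// ltW.
by rewrite !mulr_ge0// ltW.
Qed.

End constants.

Lemma interior_is_interval {R : realType} {I : set R} {a b x : R} :
  is_interval I -> I a -> I b -> a < x < b -> interior I x.
Proof.
move=> HI Ia Ib axb; have sub : `[a, b] `<=` I.
  by move=> y; rewrite /= in_itv/=; exact: HI.
by apply: (@interiorS _ _ _ sub); rewrite interior_itv_bnd/= in_itv/=.
Qed.

Lemma s_alpha_m_convex_segment {R : realType} {s alpha m : R} {D : set R} {g : R -> R}
    {a b x : R} :
  s_alpha_m_convex s alpha m D g a b -> D (b / m) -> a < x < b ->
  g x <= ((b - x) / (b - a)) `^ (alpha * s) * g a
         + (1 - ((b - x) / (b - a)) `^ (alpha * s)) * (m * g (b / m)).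
Proof.
move=> [_ convex] Dbm /andP[ax xb]; have ab := lt_trans ax xb.
have ba0 : b - a != 0 by rewrite subr_eq0 gt_eqF.
set t := (b - x) / (b - a); have xE : x = t * a + (1 - t) * b by rewrite /t; field.
have t0 : 0 <= t by rewrite divr_ge0// subr_ge0 ltW.
have t1 : t <= 1 by rewrite ler_pdivrMr ?subr_gt0// mul1r lerD2l lerN2 ltW.
by rewrite [in X in X <= _]xE mulrCA mulrA; apply: convex; rewrite ?lexx ?(ltW ab) ?t0.
Qed.

Theorem theorem5 (R : realType) (I : set R) (f : R -> R) (a b s alpha m p : R) :
  is_interval I ->
  (forall x, interior I x -> derivable f x 1) ->
  I a -> I b -> a < b ->
  derivable f a 1 -> derivable f b 1 ->
  (@lebesgue_measure R).-integrable `[a, b] (fun x => (derive1 f x)%:E) ->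
  0 < s <= 1 -> 0 <= alpha <= 1 -> 0 < m <= 1 ->
  interior I (b / m) ->
  1 < p ->
  let q := p / (p - 1) in
  s_alpha_m_convex s alpha m (interior I) (fun x => `|derive1 f x| `^ q) a b ->
  `| (f a + f b) / 2 - (b - a)^-1 * Rintegral (@lebesgue_measure R) `[a, b] f |
    <= (b - a) * (2 / ((p + 1) * (p + 2))) `^ p^-1
       * ((`|derive1 f a| `^ q + m * alpha * s * `|derive1 f (b / m)| `^ q)
           / (alpha * s + 1)) `^ q^-1.
Proof.
move=> HI fdI Ia Ib ab fda fdb _ /andP[s0 _] /andP[alpha0 _] _ Ibm p1 q convex.
have p0 : 0 < p by lra.
have q0 : 0 < q by rewrite divr_gt0// subr_gt0.
have pq : p^-1 + q^-1 = 1 by rewrite /q invf_div; field; rewrite gt_eqF.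
have fd x : a <= x <= b -> derivable f x 1.
  rewrite !le_eqVlt => /andP[/predU1P[<-//|ax] /predU1P[->//|xb]].
  by apply/fdI/(interior_is_interval HI Ia Ib); rewrite ax xb.
have r0 : 0 <= alpha * s by rewrite mulr_ge0 ?(ltW s0).
apply: le_trans (trapezoid_error_le_weighted ab p0 q0 pq r0 fd
  (fun x => s_alpha_m_convex_segment convex Ibm)) _.
rewrite [_ * (m * _)]mulrCA !mulrA; apply: ler_wpM2r; first exact: powR_ge0.
by apply: trapezoid_constant_le; rewrite ?subr_ge0 ?(ltW ab).
Qed.
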